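(* Let $\mu\in\mathcal{F}(\mathbb{X})$, let $X_1,X_2,\dots$ be i.i.d. with law $\mu$, and let $\hat\mu_n$ be the empirical measure. Then almost surely $\hat\mu_n\ll\mu$ and $H(\hat\mu_n)<\infty$, $D(\hat\mu_n\|\mu)<\infty$, and for every $n\ge1$ and every $\epsilon>0$: $$\mathbb{P}^n_\mu\big(D(\hat\mu_n\|\mu)>\epsilon\big)\le 2^{|A_\mu|+1}\exp\Big(-\frac{2\mathbf{m}_\mu^2\,n\epsilon^2}{(\log e)^2}\Big),$$ $$\mathbb{P}^n_\mu\big(|H(\hat\mu_n)-H(\mu)|>\epsilon\big)\le 2^{|A_\mu|+1}\exp\Big(-\frac{2n\epsilon^2}{(\mathbf{M}_\mu+\log e/\mathbf{m}_\mu)^2}\Big),$$ $$\mathbb{P}^n_\mu\big(D(\mu\|\hat\mu_n)>\epsilon\big)\le 2^{|A_\mu|+1}\Big[\exp\Big(-\frac{2n\epsilon^2}{(\log e)^2(1/\mathbf{m}_\mu+1)^2}\Big)+\exp(-n\mathbf{m}_\mu^2)\Big].$$ Moreover, almost surely $D(\mu\|\hat\mu_n)<\infty$ for all sufficiently large $n$.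
   Context: $\mathbb{X}$ is a countably infinite set and $\mathcal{P}(\mathbb{X})$ the set of probability measures on all subsets of $\mathbb{X}$. For $\mu\in\mathcal{P}(\mathbb{X})$, $f_\mu(x)=\mu(\{x\})$ is its pmf and $A_\mu=\{x:f_\mu(x)>0\}$ its support; $\mathcal{F}(\mathbb{X})$ is the set of $\mu$ with $|A_\mu|<\infty$. For $\mu\in\mathcal{F}(\mathbb{X})$, $\mathbf{m}_\mu=\min_{x\in A_\mu}f_\mu(x)$ and $\mathbf{M}_\mu=\log(1/\mathbf{m}_\mu)$. $\log$ is the logarithm to a fixed base $b>1$ (so $\log e=1/\ln b$). Entropy: $H(\mu)=-\sum_{x\in A_\mu}f_\mu(x)\log f_\mu(x)$. I-divergence: $D(\mu\|\nu)=\sum_{x\in A_\mu}f_\mu(x)\log\frac{f_\mu(x)}{f_\nu(x)}$ if $\mu\ll\nu$, and $+\infty$ otherwise. Given i.i.d. $X_1,X_2,\dots\sim\mu$, $\mathbb{P}_\mu$ is the law of the whole sequence and $\mathbb{P}^n_\mu$ that of $(X_1,\dots,X_n)$; the empirical measure is $\hat\mu_n(A)=\frac1n\sum_{k=1}^n\mathbb{1}_A(X_k)$ for $A\subset\mathbb{X}$. *)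

From Stdlib Require Import Reals Lra List Arith ClassicalEpsilon.
Open Scope R_scope.

Definition logb (b x : R) : R := ln x / ln b.

(* a pmf is a function nat -> R; the measure is recovered by summation *)
Definition is_pmf (f : nat -> R) : Prop :=
  (forall x, 0 <= f x) /\ infinite_sum f 1.

Definition abs_cont (nu mu : nat -> R) : Prop :=
  forall x, mu x = 0 -> nu x = 0.

Definition ent_term (b : R) (g : nat -> R) (x : nat) : R :=
  if Rlt_dec 0 (g x) then - (g x * logb b (g x)) else 0.

Definition H_is (b : R) (g : nat -> R) (h : R) : Prop :=
  infinite_sum (ent_term b g) h.
Definition H_finite (b : R) (g : nat -> R) : Prop := exists h, H_is b g h.

Definition div_term (b : R) (nu mu : nat -> R) (x : nat) : R :=
  if Rlt_dec 0 (nu x) then nu x * logb b (nu x / mu x) else 0.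

Definition D_is (b : R) (nu mu : nat -> R) (d : R) : Prop :=
  abs_cont nu mu /\ infinite_sum (div_term b nu mu) d.
Definition D_finite (b : R) (nu mu : nat -> R) : Prop :=
  exists d, D_is b nu mu d.

(* extended-real event D(nu||mu) > eps  (D = +oo when not finite) *)
Definition D_gt (b : R) (nu mu : nat -> R) (eps : R) : Prop :=
  ~ D_finite b nu mu \/ forall d, D_is b nu mu d -> eps < d.

(* extended-real event |H(nu) - H(mu)| > eps *)
Definition H_dev_gt (b : R) (nu mu : nat -> R) (eps : R) : Prop :=
  forall h1 h2, H_is b nu h1 -> H_is b mu h2 -> eps < Rabs (h1 - h2).

Definition emp (xs : list nat) (x : nat) : R :=
  INR (count_occ Nat.eq_dec xs x) / INR (length xs).

Fixpoint tuples (n K : nat) : list (list nat) :=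
  match n with
  | O => nil :: nil
  | S n' => flat_map (fun l => map (fun a => a :: l) (seq 0 K)) (tuples n' K)
  end.

Definition ind (P : Prop) : R :=
  if excluded_middle_informative P then 1 else 0.

Definition prodf (f : nat -> R) (l : list nat) : R :=
  fold_right (fun a acc => f a * acc) 1 l.

(* P^n_mu restricted to the truncated box {0..K-1}^n *)
Definition trunc_prob (f : nat -> R) (n K : nat) (E : list nat -> Prop) : R :=
  fold_right Rplus 0 (map (fun l => prodf f l * ind (E l)) (tuples n K)).

(* P^n_mu(E) <= c.  Since P^n_mu(E) = sup_K trunc_prob f n K E
   (countable additivity), this is equivalent to the bound. *)
Definition prob_le (f : nat -> R) (n : nat) (E : list nat -> Prop) (c : R) : Prop :=
  forall K, trunc_prob f n K E <= c.

(** All quantities involved depend on the sample only through the empirical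
    frequencies on the finite support [A] of [mu].  Elementary inequalities
    for the logarithm bound [D(mu_n||mu)], [|H(mu_n) - H(mu)|] and, as long as
    the excess [T = sum_x (mu_n(x) - mu(x))^+] stays below [m / sqrt 2], also
    [D(mu||mu_n)] by constant multiples of [T].  Since [T] is the maximum over
    [S] included in [A] of [mu_n(S) - mu(S)], a union bound over the [2^|A|]
    subsets together with Hoeffding's inequality for the Bernoulli frequency
    [mu_n(S)] gives [P(T >= s) <= 2^|A| exp(-2 n s^2)].  Finally [D(mu||mu_n)]
    is finite as soon as every atom of [mu] has been observed, which fails
    after [N] draws with probability at most [|A| (1 - m)^N]. *)

From Stdlib Require Import Reals List Lra Lia ClassicalEpsilon.
From Coquelicot Require Coquelicot.
Open Scope R_scope.

Lemma ln_le_sub1 y : 0 < y -> ln y <= y - 1.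
Proof. intros Hy. generalize (exp_ineq1_le (ln y)). rewrite exp_ln; lra. Qed.

Lemma one_sub_inv_le_ln y : 0 < y -> 1 - / y <= ln y.
Proof.
  intros Hy. generalize (ln_le_sub1 (/ y) (Rinv_0_lt_compat _ Hy)).
  rewrite ln_Rinv; lra.
Qed.

Lemma ln_le x y : 0 < x -> x <= y -> ln x <= ln y.
Proof. intros Hx [Hxy | <-]; [left; apply ln_increasing | right]; auto. Qed.

Lemma ln_div x y : 0 < x -> 0 < y -> ln (x / y) = ln x - ln y.
Proof.
  intros Hx Hy. unfold Rdiv.
  rewrite ln_mult, ln_Rinv; auto. apply Rinv_0_lt_compat; auto.
Qed.

Lemma ln_gt_0 x : 1 < x -> 0 < ln x.
Proof. intros Hx. rewrite <- ln_1. apply ln_increasing; lra. Qed.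

Lemma one_le_exp x : 0 <= x -> 1 <= exp x.
Proof. intros Hx. generalize (exp_ineq1_le x). lra. Qed.

Lemma exp_pow x n : exp x ^ n = exp (INR n * x).
Proof.
  induction n as [|n IH]; simpl pow; [rewrite Rmult_0_l, exp_0; reflexivity|].
  rewrite IH, <- exp_plus, S_INR. f_equal; ring.
Qed.

Lemma Rdiv_le_compat_r x y z : 0 < z -> x <= y -> x / z <= y / z.
Proof.
  intros Hz Hxy. unfold Rdiv. apply Rmult_le_compat_r; auto.
  left; apply Rinv_0_lt_compat; auto.
Qed.

Lemma Rdiv_nonneg x y : 0 <= x -> 0 < y -> 0 <= x / y.
Proof.
  intros Hx Hy. unfold Rdiv. apply Rmult_le_pos; auto.
  left; apply Rinv_0_lt_compat; auto.
Qed.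

Lemma bernoulli_mix_pos p x : 0 <= p <= 1 -> 0 < 1 - p + p * exp x.
Proof.
  intros Hp. assert (0 < exp x) by apply exp_pos.
  destruct (Rle_lt_dec p 0); [nra|].
  destruct (Rle_lt_dec (exp x) 1); nra.
Qed.

Lemma tilted_variance_le p e : 0 <= p <= 1 -> 0 < e ->
  p * e * (1 - p) / (1 - p + p * e) ^ 2 <= / 4.
Proof.
  intros Hp He.
  assert (HD : 0 < 1 - p + p * e) by (rewrite <- (exp_ln e) by auto; apply bernoulli_mix_pos; auto).
  assert (Hq : p * e * (1 - p) <= / 4 * (1 - p + p * e) ^ 2)
    by (generalize (pow2_ge_0 (1 - p - p * e)); nra).
  apply Rle_trans with (/ 4 * (1 - p + p * e) ^ 2 / (1 - p + p * e) ^ 2).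
  - apply Rdiv_le_compat_r; auto. apply pow_lt; auto.
  - right; field; lra.
Qed.

Section Calculus.
Import Coquelicot.Coquelicot.

Lemma le_of_derivative_nonneg (F F' : R -> R) a b : a <= b ->
  (forall c, a <= c <= b -> derivable_pt_lim F c (F' c)) ->
  (forall c, a <= c <= b -> 0 <= F' c) -> F a <= F b.
Proof.
  intros Hab HD HP. destruct (Req_dec a b) as [->|Hne]; [lra|].
  destruct (MVT_cor2 F F' a b) as [c [Hc1 Hc2]]; [lra|exact HD|].
  assert (0 <= F' c) by (apply HP; lra).
  assert (0 <= F' c * (b - a)) by (apply Rmult_le_pos; lra). lra.
Qed.

Lemma ln_le_half_sub_inv y : 1 <= y -> ln y <= (y - / y) / 2.
Proof.
  intros Hy.
  cut (0 <= (y - / y) / 2 - ln y); [lra|].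
  replace 0 with ((1 - / 1) / 2 - ln 1) by (rewrite ln_1; field).
  apply (le_of_derivative_nonneg (fun y => (y - / y) / 2 - ln y)
           (fun y => (1 + / y ^ 2) / 2 - / y)); auto.
  - intros c Hc. apply is_derive_Reals. auto_derive.
    + repeat split; lra.
    + field. lra.
  - intros c Hc. replace ((1 + / c ^ 2) / 2 - / c) with ((1 - / c) ^ 2 / 2) by (field; lra).
    apply Rmult_le_pos; [apply pow2_ge_0 | lra].
Qed.

(* Hoeffding's lemma: [psi l = ln (1 - p + p e^l)] has [psi 0 = 0],
   [psi' 0 = p] and [psi'' <= 1/4]. *)
Lemma bernoulli_mgf_le p l : 0 <= p <= 1 -> 0 <= l ->
  1 - p + p * exp l <= exp (p * l + l ^ 2 / 8).
Proof.
  intros Hp Hl.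
  set (D := fun l => 1 - p + p * exp l).
  assert (HD : forall l, 0 < D l) by (intros; apply bernoulli_mix_pos; auto).
  set (dpsi := fun l => p + l / 4 - p * exp l / D l).
  assert (Hdpsi : forall c, 0 <= c -> 0 <= dpsi c).
  { intros c Hc.
    replace 0 with (dpsi 0) by (unfold dpsi, D; rewrite exp_0; field; lra).
    apply (le_of_derivative_nonneg dpsi (fun l => / 4 - p * exp l * (1 - p) / D l ^ 2)); auto.
    - intros x _. apply is_derive_Reals. unfold dpsi, D. auto_derive.
      + generalize (HD x); unfold D; lra.
      + field. generalize (HD x); unfold D; lra.
    - intros x _. generalize (tilted_variance_le p (exp x) Hp (exp_pos x)). unfold D. lra. }
  assert (Hpsi : ln (D l) <= p * l + l ^ 2 / 8).
  { cut (0 <= p * l + l ^ 2 / 8 - ln (D l)); [lra|].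
    replace 0 with (p * 0 + 0 ^ 2 / 8 - ln (D 0))
      by (unfold D; rewrite exp_0; replace (1 - p + p * 1) with 1 by ring; rewrite ln_1; field).
    apply (le_of_derivative_nonneg (fun l => p * l + l ^ 2 / 8 - ln (D l)) dpsi); auto.
    - intros x _. apply is_derive_Reals. unfold dpsi, D. auto_derive.
      + generalize (HD x); unfold D; lra.
      + field. generalize (HD x); unfold D; lra.
    - intros x Hx. apply Hdpsi. lra. }
  change (D l <= exp (p * l + l ^ 2 / 8)).
  rewrite <- (exp_ln (D l)) by apply HD.
  destruct Hpsi as [Hlt | ->]; [left; apply exp_increasing; auto | right; reflexivity].
Qed.

End Calculus.

Definition lsum {T} (F : T -> R) (L : list T) : R := fold_right Rplus 0 (map F L).

Lemma lsum_cons {T} (F : T -> R) a L : lsum F (a :: L) = F a + lsum F L.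
Proof. reflexivity. Qed.

Lemma lsum_app {T} (F : T -> R) L1 L2 : lsum F (L1 ++ L2) = lsum F L1 + lsum F L2.
Proof.
  induction L1 as [|a L1 IH]; simpl app; [change (lsum F nil) with 0; lra|].
  rewrite !lsum_cons, IH; lra. Qed.

Lemma lsum_plus {T} (F G : T -> R) L :
  lsum (fun x => F x + G x) L = lsum F L + lsum G L.
Proof. induction L as [|a L IH]; [unfold lsum; simpl; lra|]. rewrite !lsum_cons, IH. lra. Qed.

Lemma lsum_scal {T} (F : T -> R) c L : lsum (fun x => c * F x) L = c * lsum F L.
Proof. induction L as [|a L IH]; [unfold lsum; simpl; lra|]. rewrite !lsum_cons, IH. lra. Qed.

Lemma lsum_minus {T} (F G : T -> R) L :
  lsum (fun x => F x - G x) L = lsum F L - lsum G L.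
Proof. induction L as [|a L IH]; [unfold lsum; simpl; lra|]. rewrite !lsum_cons, IH. lra. Qed.

Lemma lsum_const {T} c (L : list T) : lsum (fun _ => c) L = INR (length L) * c.
Proof.
  induction L as [|a L IH]; [unfold lsum; simpl; ring|].
  rewrite lsum_cons, IH, length_cons, S_INR. ring.
Qed.

Lemma lsum_ext {T} (F G : T -> R) L :
  (forall x, In x L -> F x = G x) -> lsum F L = lsum G L.
Proof.
  induction L as [|a L IH]; intros H; [reflexivity|].
  rewrite !lsum_cons, IH, H; simpl; auto.
  intros; apply H; simpl; auto.
Qed.

Lemma lsum_le {T} (F G : T -> R) L :
  (forall x, In x L -> F x <= G x) -> lsum F L <= lsum G L.
Proof.
  induction L as [|a L IH]; intros H; [unfold lsum; simpl; lra|]. rewrite !lsum_cons.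
  apply Rplus_le_compat; [apply H; simpl | apply IH; intros; apply H; simpl]; auto.
Qed.

Lemma lsum_nonneg {T} (F : T -> R) L : (forall x, In x L -> 0 <= F x) -> 0 <= lsum F L.
Proof.
  intros H. replace 0 with (lsum (fun _ => 0) L) by (rewrite lsum_const; ring).
  apply lsum_le; auto.
Qed.

Lemma lsum_zero {T} (F : T -> R) L : (forall x, In x L -> F x = 0) -> lsum F L = 0.
Proof. intros H. rewrite (lsum_ext F (fun _ => 0)), lsum_const; auto. ring. Qed.

Lemma lsum_map {T U} (F : U -> R) (g : T -> U) L :
  lsum F (map g L) = lsum (fun x => F (g x)) L.
Proof. unfold lsum. rewrite map_map. reflexivity. Qed.

Lemma lsum_flat_map {T U} (F : U -> R) (g : T -> list U) L :
  lsum F (flat_map g L) = lsum (fun x => lsum F (g x)) L.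
Proof.
  induction L as [|a L IH]; [reflexivity|].
  simpl. rewrite lsum_app, lsum_cons, IH. reflexivity.
Qed.

Lemma lsum_exchange {T U} (F : T -> U -> R) L1 L2 :
  lsum (fun x => lsum (F x) L2) L1 = lsum (fun y => lsum (fun x => F x y) L1) L2.
Proof.
  induction L1 as [|a L1 IH].
  - symmetry. apply lsum_zero. reflexivity.
  - rewrite lsum_cons, IH, <- lsum_plus. apply lsum_ext. reflexivity.
Qed.

Lemma lsum_ge_term {T} (F : T -> R) L a :
  In a L -> (forall x, In x L -> 0 <= F x) -> F a <= lsum F L.
Proof.
  induction L as [|c L IH]; intros Ha H; [destruct Ha|]. rewrite lsum_cons.
  assert (0 <= F c) by (apply H; simpl; auto).
  assert (0 <= lsum F L) by (apply lsum_nonneg; intros; apply H; simpl; auto).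
  destruct Ha as [<-|Ha]; [lra|].
  assert (F a <= lsum F L) by (apply IH; auto; intros; apply H; simpl; auto). lra.
Qed.

Lemma lsum_remove (F : nat -> R) L a : In a L -> NoDup L ->
  lsum F L = F a + lsum F (remove Nat.eq_dec a L).
Proof.
  induction L as [|c L IH]; intros Ha Hn; [destruct Ha|]. inversion Hn; subst.
  simpl remove. destruct (Nat.eq_dec a c) as [<-|Hne].
  - rewrite notin_remove by auto. reflexivity.
  - destruct Ha as [<-|Ha]; [congruence|]. rewrite !lsum_cons, IH by auto. lra.
Qed.

Lemma NoDup_remove_elt L a : NoDup L -> NoDup (remove Nat.eq_dec a L).
Proof.
  induction L as [|c L IH]; intros Hn; simpl; [constructor|]. inversion Hn; subst.
  destruct (Nat.eq_dec a c); auto. constructor; auto.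
  intros H. apply in_remove in H. tauto.
Qed.

Lemma lsum_le_of_support (F : nat -> R) L1 L2 : NoDup L1 -> NoDup L2 ->
  (forall x, In x L1 -> ~ In x L2 -> F x = 0) -> (forall x, In x L2 -> 0 <= F x) ->
  lsum F L1 <= lsum F L2.
Proof.
  revert L2; induction L1 as [|a L1 IH]; intros L2 N1 N2 H1 H2.
  - apply lsum_nonneg; auto.
  - inversion N1; subst. rewrite lsum_cons. destruct (in_dec Nat.eq_dec a L2) as [Ha|Ha].
    + rewrite (lsum_remove F L2 a) by auto.
      assert (lsum F L1 <= lsum F (remove Nat.eq_dec a L2)); [|lra].
      apply IH; auto using NoDup_remove_elt.
      * intros x Hx Hx2. apply H1; [simpl; auto|]. intros Hx3. apply Hx2.
        apply in_in_remove; auto. intros ->; auto.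
      * intros x Hx. apply in_remove in Hx. apply H2; tauto.
    + rewrite H1 by (simpl; auto). assert (lsum F L1 <= lsum F L2); [|lra].
      apply IH; auto. intros x Hx Hx2. apply H1; simpl; auto.
Qed.

Lemma lsum_eq_of_support (F : nat -> R) L1 L2 : NoDup L1 -> NoDup L2 ->
  (forall x, In x L1 -> ~ In x L2 -> F x = 0) -> (forall x, In x L2 -> ~ In x L1 -> F x = 0) ->
  lsum F L1 = lsum F L2.
Proof.
  revert L2; induction L1 as [|a L1 IH]; intros L2 N1 N2 H1 H2.
  - symmetry. apply lsum_zero. intros x Hx. apply H2; auto.
  - inversion N1; subst. rewrite lsum_cons. destruct (in_dec Nat.eq_dec a L2) as [Ha|Ha].
    + rewrite (lsum_remove F L2 a), (IH (remove Nat.eq_dec a L2)); auto using NoDup_remove_elt.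
      * intros x Hx Hx2. apply H1; [simpl; auto|]. intros Hx3. apply Hx2.
        apply in_in_remove; auto. intros ->; auto.
      * intros x Hx Hx2. apply in_remove in Hx. apply H2; [tauto|].
        intros [E|E]; [destruct Hx; auto | tauto].
    + rewrite H1 by (simpl; auto). rewrite (IH L2); auto; [lra| |].
      * intros x Hx Hx2. apply H1; simpl; auto.
      * intros x Hx Hx2. destruct (Nat.eq_dec x a) as [->|]; [tauto|].
        apply H2; auto. intros [E|E]; auto.
Qed.

Lemma lsum_indicator (w : nat -> R) A y : In y A -> NoDup A ->
  lsum (fun a => w a * (if Nat.eq_dec y a then 1 else 0)) A = w y.
Proof.
  intros Hy Hn. rewrite (lsum_remove _ A y) by auto.
  destruct (Nat.eq_dec y y); [|congruence]. rewrite lsum_zero; [lra|].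
  intros x Hx. apply in_remove in Hx. destruct (Nat.eq_dec y x); [subst; tauto | lra].
Qed.

Lemma lsum_count_occ (w : nat -> R) A l : NoDup A -> incl l A ->
  lsum (fun x => w x * INR (count_occ Nat.eq_dec l x)) A = lsum w l.
Proof.
  intros Hn; induction l as [|y l IH]; intros Hl.
  - apply lsum_zero. intros; simpl; ring.
  - rewrite lsum_cons, <- IH by (intros z Hz; apply Hl; simpl; auto).
    rewrite <- (lsum_indicator w A y) by (auto; apply Hl; simpl; auto).
    rewrite <- lsum_plus. apply lsum_ext. intros x _. simpl.
    destruct (Nat.eq_dec y x); [rewrite S_INR|]; ring.
Qed.

Lemma sum_f_R0_lsum (w : nat -> R) N : sum_f_R0 w N = lsum w (seq 0 (S N)).
Proof.
  induction N as [|N IH]; [unfold lsum; simpl; lra|].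
  rewrite seq_S, lsum_app. simpl sum_f_R0. rewrite IH. unfold lsum at 3. simpl. lra.
Qed.

Lemma infinite_sum_finite_support (w : nat -> R) A : NoDup A ->
  (forall x, ~ In x A -> w x = 0) -> infinite_sum w (lsum w A).
Proof.
  intros Hn Hz eps Heps.
  exists (S (fold_right Nat.max 0%nat A)). intros N HN.
  rewrite sum_f_R0_lsum, (lsum_eq_of_support w (seq 0 (S N)) A); auto using seq_NoDup.
  - unfold Rdist. rewrite Rminus_diag, Rabs_R0. lra.
  - intros x Hx Hx2. exfalso. apply Hx2. apply in_seq. split; [lia|].
    assert (x <= fold_right Nat.max 0%nat A)%nat; [|lia].
    clear -Hx. induction A as [|a A IH]; destruct Hx; simpl; subst; [lia|].
    specialize (IH H). lia.
Qed.

Fixpoint powerset (A : list nat) : list (list nat) :=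
  match A with
  | nil => nil :: nil
  | a :: A' => map (cons a) (powerset A') ++ powerset A'
  end.

Lemma length_powerset A : length (powerset A) = (2 ^ length A)%nat.
Proof. induction A as [|a A IH]; simpl; auto. rewrite length_app, length_map, IH. lia. Qed.

Lemma filter_In_powerset (P : nat -> bool) A : In (filter P A) (powerset A).
Proof.
  induction A as [|a A IH]; simpl; auto.
  destruct (P a); apply in_or_app; [left; apply in_map | right]; auto.
Qed.

Record fin_pmf (f : nat -> R) (A : list nat) : Prop := {
  fin_pmf_nonneg : forall x, 0 <= f x;
  fin_pmf_NoDup : NoDup A;
  fin_pmf_support : forall x, In x A <-> 0 < f x;
  fin_pmf_sum : lsum f A = 1 }.

Arguments fin_pmf_nonneg {f A}.
Arguments fin_pmf_NoDup {f A}.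
Arguments fin_pmf_support {f A}.
Arguments fin_pmf_sum {f A}.

Lemma fin_pmf_of_is_pmf f A : is_pmf f -> NoDup A -> (forall x, In x A <-> 0 < f x) ->
  fin_pmf f A.
Proof.
  intros [Hf0 Hf1] Hn HA. split; auto.
  assert (Hout : forall x, ~ In x A -> f x = 0).
  { intros x Hx. destruct (Hf0 x) as [Hpos|Hz]; auto. exfalso; apply Hx, HA; auto. }
  symmetry. eapply uniqueness_sum; [exact Hf1 | apply infinite_sum_finite_support; auto].
Qed.

Section FinPmf.
Variables (f : nat -> R) (A : list nat).
Hypothesis Hf : fin_pmf f A.

Lemma fin_pmf_out x : ~ In x A -> f x = 0.
Proof.
  intros Hx. destruct (fin_pmf_nonneg Hf x) as [Hpos|Hz]; auto.
  exfalso; apply Hx, (fin_pmf_support Hf); auto.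
Qed.

Lemma fin_pmf_le_1 x : f x <= 1.
Proof.
  destruct (in_dec Nat.eq_dec x A) as [Hx|Hx]; [|rewrite fin_pmf_out; auto; lra].
  rewrite <- (fin_pmf_sum Hf). apply lsum_ge_term; auto.
  intros; apply (fin_pmf_nonneg Hf).
Qed.

Lemma fin_pmf_nonempty : (0 < length A)%nat.
Proof. destruct A; [|simpl; lia]. generalize (fin_pmf_sum Hf). unfold lsum; simpl; lra. Qed.

End FinPmf.

(** * The product measure on truncated sample spaces *)

Lemma ind_true (P : Prop) : P -> ind P = 1.
Proof. intros H. unfold ind. destruct (excluded_middle_informative P); tauto. Qed.

Lemma ind_false (P : Prop) : ~ P -> ind P = 0.
Proof. intros H. unfold ind. destruct (excluded_middle_informative P); tauto. Qed.

Lemma ind_bounds (P : Prop) : 0 <= ind P <= 1.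
Proof. unfold ind. destruct (excluded_middle_informative P); lra. Qed.

Lemma prodf_nonneg f l : (forall x, 0 <= f x) -> 0 <= prodf f l.
Proof. intros H; induction l; simpl; [lra|]. apply Rmult_le_pos; auto. Qed.

Lemma prodf_exp g l : prodf (fun y => exp (g y)) l = exp (lsum g l).
Proof.
  induction l as [|a l IH]; [unfold lsum; simpl; rewrite exp_0; reflexivity|].
  simpl. rewrite IH, lsum_cons, exp_plus. reflexivity.
Qed.

Lemma length_tuples n K l : In l (tuples n K) -> length l = n.
Proof.
  revert l; induction n as [|n IH]; simpl; intros l H.
  - destruct H as [<-|[]]; reflexivity.
  - apply in_flat_map in H. destruct H as [l' [H1 H2]]. apply in_map_iff in H2.
    destruct H2 as [a [<- _]]. simpl. rewrite IH; auto.
Qed.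

Lemma trunc_prob_lsum f n K E :
  trunc_prob f n K E = lsum (fun l => prodf f l * ind (E l)) (tuples n K).
Proof. reflexivity. Qed.

Lemma lsum_tuples_prod_firstn f h K n N : (N <= n)%nat ->
  lsum (fun l => prodf f l * prodf h (firstn N l)) (tuples n K) =
  (lsum (fun a => f a * h a) (seq 0 K)) ^ N * (lsum f (seq 0 K)) ^ (n - N).
Proof.
  revert N; induction n as [|n IH]; intros N HN.
  - replace N with 0%nat by lia. unfold lsum; simpl. lra.
  - simpl tuples. rewrite lsum_flat_map.
    destruct N as [|N].
    + rewrite Nat.sub_0_r.
      transitivity (lsum (fun l => lsum f (seq 0 K) * (prodf f l * prodf h (firstn 0 l)))
                         (tuples n K)).
      * apply lsum_ext. intros l _. rewrite lsum_map. simpl.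
        rewrite Rmult_comm, <- lsum_scal. apply lsum_ext. intros; ring.
      * rewrite lsum_scal, IH by lia. simpl. rewrite Nat.sub_0_r. ring.
    + simpl pow. replace (S n - S N)%nat with (n - N)%nat by lia.
      transitivity (lsum (fun l => lsum (fun a => f a * h a) (seq 0 K) *
                                   (prodf f l * prodf h (firstn N l))) (tuples n K)).
      * apply lsum_ext. intros l _. rewrite lsum_map. simpl.
        rewrite Rmult_comm, <- lsum_scal. apply lsum_ext. intros; ring.
      * rewrite lsum_scal, IH by lia. ring.
Qed.

Section TruncatedProb.
Variables (f : nat -> R) (A : list nat).
Hypothesis Hf : fin_pmf f A.

Lemma prodf_neq0_incl l : prodf f l <> 0 -> incl l A.
Proof.
  induction l as [|a l IH]; intros Hp y Hy; [destruct Hy|].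
  simpl in Hp. destruct Hy as [<-|Hy].
  - apply (fin_pmf_support Hf). destruct (fin_pmf_nonneg Hf a) as [Ha|Ha]; auto.
    exfalso; apply Hp; rewrite <- Ha; ring.
  - apply IH; auto. intros E; apply Hp; rewrite E; ring.
Qed.

Lemma lsum_seq_le_support h K : (forall x, 0 <= h x) ->
  lsum (fun a => f a * h a) (seq 0 K) <= lsum (fun a => f a * h a) A.
Proof.
  intros Hh. apply lsum_le_of_support; [apply seq_NoDup | apply (fin_pmf_NoDup Hf) | |].
  - intros x _ Hx. rewrite (fin_pmf_out f A Hf x Hx). ring.
  - intros; apply Rmult_le_pos; auto. apply (fin_pmf_nonneg Hf).
Qed.

Lemma lsum_tuples_prod_firstn_le h K n N : (forall x, 0 <= h x) -> (N <= n)%nat ->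
  lsum (fun l => prodf f l * prodf h (firstn N l)) (tuples n K) <=
  (lsum (fun a => f a * h a) A) ^ N.
Proof.
  intros Hh HN. rewrite lsum_tuples_prod_firstn by auto.
  assert (Hfh := lsum_seq_le_support h K Hh).
  assert (Hf1 := lsum_seq_le_support (fun _ => 1) K (fun _ => Rle_0_1)).
  rewrite !(lsum_ext (fun a => f a * 1) f) in Hf1 by (intros; ring).
  rewrite (fin_pmf_sum Hf) in Hf1.
  assert (0 <= lsum (fun a => f a * h a) (seq 0 K))
    by (apply lsum_nonneg; intros; apply Rmult_le_pos; auto; apply (fin_pmf_nonneg Hf)).
  assert (0 <= lsum f (seq 0 K)) by (apply lsum_nonneg; intros; apply (fin_pmf_nonneg Hf)).
  apply Rle_trans with (lsum (fun a => f a * h a) A ^ N * 1); [|right; ring].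
  apply Rmult_le_compat; try apply pow_le; auto.
  - apply pow_incr; auto.
  - rewrite <- (pow1 (n - N)). apply pow_incr. lra.
Qed.

(* [trunc_prob] only charges samples inside [A]: elsewhere [prodf f] vanishes. *)
Lemma trunc_prob_le_expect n K E G : (forall l, 0 <= G l) ->
  (forall l, length l = n -> incl l A -> E l -> 1 <= G l) ->
  trunc_prob f n K E <= lsum (fun l => prodf f l * G l) (tuples n K).
Proof.
  intros HG H. rewrite trunc_prob_lsum. apply lsum_le. intros l Hl.
  destruct (Req_dec (prodf f l) 0) as [E0|E0]; [rewrite E0, !Rmult_0_l; lra|].
  assert (0 <= prodf f l) by (apply prodf_nonneg, (fin_pmf_nonneg Hf)).
  apply Rmult_le_compat_l; auto.
  destruct (classic (E l)) as [He|He].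
  - rewrite ind_true by auto.
    apply H; [exact (length_tuples _ _ _ Hl) | apply prodf_neq0_incl | ]; auto.
  - rewrite ind_false by auto. auto.
Qed.

Lemma trunc_prob_mono n K E E' :
  (forall l, length l = n -> incl l A -> E l -> E' l) ->
  trunc_prob f n K E <= trunc_prob f n K E'.
Proof.
  intros H. rewrite (trunc_prob_lsum f n K E'). apply trunc_prob_le_expect.
  - intros; apply ind_bounds.
  - intros l H1 H2 H3. rewrite ind_true; auto. lra.
Qed.

Lemma trunc_prob_False n K : trunc_prob f n K (fun _ => False) = 0.
Proof. apply lsum_zero. intros. rewrite ind_false; [ring | tauto]. Qed.

Lemma trunc_prob_or n K E E1 E2 :
  (forall l, length l = n -> incl l A -> E l -> E1 l \/ E2 l) ->
  trunc_prob f n K E <= trunc_prob f n K E1 + trunc_prob f n K E2.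
Proof.
  intros H. rewrite !(trunc_prob_lsum f n K), <- lsum_plus.
  apply Rle_trans with (lsum (fun l => prodf f l * (ind (E1 l) + ind (E2 l))) (tuples n K)).
  - apply trunc_prob_le_expect.
    + intros; generalize (ind_bounds (E1 l)) (ind_bounds (E2 l)); lra.
    + intros l H1 H2 H3. generalize (ind_bounds (E1 l)) (ind_bounds (E2 l)).
      destruct (H l H1 H2 H3) as [X|X]; rewrite (ind_true _ X); lra.
  - right. apply lsum_ext. intros; ring.
Qed.

Lemma trunc_prob_union {T} n K E (F : T -> list nat -> Prop) Ss :
  (forall l, length l = n -> incl l A -> E l -> exists S, In S Ss /\ F S l) ->
  trunc_prob f n K E <= lsum (fun S => trunc_prob f n K (F S)) Ss.
Proof.
  intros H. rewrite (lsum_ext _ (fun S => lsum (fun l => prodf f l * ind (F S l)) (tuples n K)))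
    by reflexivity.
  rewrite lsum_exchange.
  apply Rle_trans with (lsum (fun l => prodf f l * lsum (fun S => ind (F S l)) Ss) (tuples n K)).
  - apply trunc_prob_le_expect.
    + intros; apply lsum_nonneg; intros; apply ind_bounds.
    + intros l H1 H2 H3. destruct (H l H1 H2 H3) as [S [HS HF]].
      rewrite <- (ind_true _ HF). apply (lsum_ge_term (fun S => ind (F S l))); auto.
      intros; apply ind_bounds.
  - right. apply lsum_ext. intros; rewrite <- lsum_scal. reflexivity.
Qed.

End TruncatedProb.

(** * Hoeffding's inequality for empirical frequencies *)

Section Hoeffding.
Variables (f : nat -> R) (A : list nat).
Hypothesis Hf : fin_pmf f A.

Lemma lsum_exp_indicator g lam : (forall y, g y = 0 \/ g y = 1) ->
  lsum (fun a => f a * exp (lam * g a)) A =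
  1 - lsum (fun a => f a * g a) A + lsum (fun a => f a * g a) A * exp lam.
Proof.
  intros Hg01.
  transitivity (lsum (fun a => f a + (exp lam - 1) * (f a * g a)) A).
  - apply lsum_ext. intros x _. destruct (Hg01 x) as [E|E]; rewrite E.
    + rewrite Rmult_0_r, exp_0. ring.
    + rewrite Rmult_1_r. ring.
  - rewrite lsum_plus, lsum_scal, (fin_pmf_sum Hf). ring.
Qed.

(* Exponential Markov inequality with [lam = 4 s], the minimiser of
   [- lam s + lam^2 / 8]. *)
Lemma hoeffding_frequency g n K s : (forall y, g y = 0 \/ g y = 1) -> 0 <= s -> (1 <= n)%nat ->
  trunc_prob f n K (fun l => s <= lsum g l / INR n - lsum (fun a => f a * g a) A)
  <= exp (- (2 * INR n * s ^ 2)).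
Proof.
  intros Hg01 Hs Hn.
  set (mu := lsum (fun a => f a * g a) A).
  set (lam := 4 * s).
  set (c := exp (- (lam * INR n * (mu + s)))).
  set (h := fun y => exp (lam * g y)).
  assert (HnR : 0 < INR n) by (apply lt_0_INR; lia).
  assert (Hf0 := fin_pmf_nonneg Hf).
  assert (Hmu : 0 <= mu <= 1).
  { split.
    { apply lsum_nonneg. intros x _. apply Rmult_le_pos; auto. destruct (Hg01 x) as [-> | ->]; lra. }
    rewrite <- (fin_pmf_sum Hf). apply lsum_le. intros x _.
    destruct (Hg01 x) as [E|E]; rewrite E; generalize (Hf0 x); lra. }
  apply Rle_trans with (lsum (fun l => prodf f l * (c * prodf h (firstn n l))) (tuples n K)).
  { apply trunc_prob_le_expect with A; auto.
    - intros l. apply Rmult_le_pos; [left; apply exp_pos|].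
      apply prodf_nonneg. intros; left; apply exp_pos.
    - intros l Hl _ HE. rewrite firstn_all2 by lia. unfold h, c.
      rewrite prodf_exp, <- exp_plus, lsum_scal. apply one_le_exp.
      apply Rmult_le_compat_r with (r := INR n) in HE; [|lra].
      replace ((lsum g l / INR n - mu) * INR n) with (lsum g l - mu * INR n) in HE by (field; lra).
      assert (0 <= lam * (lsum g l - mu * INR n - s * INR n))
        by (apply Rmult_le_pos; unfold lam; lra).
      lra. }
  rewrite (lsum_ext _ (fun l => c * (prodf f l * prodf h (firstn n l)))) by (intros; ring).
  rewrite lsum_scal.
  assert (Hprod := lsum_tuples_prod_firstn_le f A Hf h K n n
                     (fun x => Rlt_le _ _ (exp_pos _)) (Nat.le_refl n)).
  unfold h in Hprod. rewrite lsum_exp_indicator in Hprod by auto. fold mu in Hprod.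
  assert (Hmgf := bernoulli_mgf_le mu lam Hmu ltac:(unfold lam; lra)).
  assert (0 <= 1 - mu + mu * exp lam) by (generalize (exp_pos lam); nra).
  apply Rle_trans with (c * exp (mu * lam + lam ^ 2 / 8) ^ n).
  { apply Rmult_le_compat_l; [left; apply exp_pos|].
    eapply Rle_trans; [exact Hprod|]. apply pow_incr; lra. }
  unfold c. rewrite exp_pow, <- exp_plus. right. f_equal. unfold lam. field.
Qed.

End Hoeffding.

Lemma emp_nonneg l x : 0 <= emp l x.
Proof.
  unfold emp. destruct (length l) eqn:E; [simpl; rewrite Rdiv_0_r; lra|].
  apply Rdiv_nonneg; [apply pos_INR | apply lt_0_INR; lia].
Qed.

Lemma emp_le_1 l x : emp l x <= 1.
Proof.
  unfold emp. destruct (length l) eqn:E; [simpl; rewrite Rdiv_0_r; lra|].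
  assert (0 < INR (S n)) by (apply lt_0_INR; lia).
  apply (Rmult_le_reg_r (INR (S n))); auto. unfold Rdiv. rewrite Rmult_assoc, Rinv_l by lra.
  rewrite Rmult_1_r, Rmult_1_l. apply le_INR. rewrite <- E. apply count_occ_bound.
Qed.

Lemma emp_notin l x : ~ In x l -> emp l x = 0.
Proof.
  intros H. unfold emp. apply (count_occ_not_In Nat.eq_dec) in H. rewrite H.
  simpl. unfold Rdiv. ring.
Qed.

Lemma emp_pos l x : In x l -> 0 < emp l x.
Proof.
  intros H. unfold emp. apply (count_occ_In Nat.eq_dec) in H.
  assert (length l <> 0%nat) by (destruct l; simpl in *; lia).
  apply Rdiv_lt_0_compat; apply lt_0_INR; lia.
Qed.

Lemma lsum_emp A l : NoDup A -> incl l A -> (1 <= length l)%nat -> lsum (emp l) A = 1.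
Proof.
  intros Hn Hl Hlen.
  assert (0 < INR (length l)) by (apply lt_0_INR; lia).
  transitivity (lsum (fun _ => / INR (length l)) l).
  - rewrite <- (lsum_count_occ _ A l Hn Hl). apply lsum_ext. intros. unfold emp, Rdiv. ring.
  - rewrite lsum_const. field. lra.
Qed.

(* For two probability vectors on [A] this is their total variation distance,
   see [excess_sym]. *)
Definition excess (p q : nat -> R) (A : list nat) : R := lsum (fun x => Rmax 0 (p x - q x)) A.

Lemma excess_nonneg p q A : 0 <= excess p q A.
Proof. apply lsum_nonneg. intros; apply Rmax_l. Qed.

Lemma excess_ge_term p q A x : In x A -> Rmax 0 (p x - q x) <= excess p q A.
Proof.
  intros H. apply (lsum_ge_term (fun x => Rmax 0 (p x - q x))); auto.
  intros; apply Rmax_l.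
Qed.

Lemma excess_sym p q A : lsum p A = lsum q A -> excess q p A = excess p q A.
Proof.
  intros Hpq. unfold excess.
  assert (lsum (fun x => Rmax 0 (p x - q x) - Rmax 0 (q x - p x)) A = lsum p A - lsum q A).
  { rewrite <- lsum_minus. apply lsum_ext. intros x _.
    destruct (Rle_dec (p x) (q x)); [rewrite Rmax_left, Rmax_right | rewrite Rmax_right, Rmax_left];
      lra. }
  rewrite lsum_minus in H. lra.
Qed.

Definition indicator (S : list nat) (y : nat) : R := if in_dec Nat.eq_dec y S then 1 else 0.

Lemma indicator_01 S y : indicator S y = 0 \/ indicator S y = 1.
Proof. unfold indicator. destruct (in_dec Nat.eq_dec y S); auto. Qed.

Section Excess.
Variables (f : nat -> R) (A : list nat).
Hypothesis Hf : fin_pmf f A.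

(* The maximum of [mu_n(S) - mu(S)] is attained at [S = {x | f x < emp l x}]. *)
Lemma excess_emp_attained l n s : length l = n -> (1 <= n)%nat -> incl l A ->
  s <= excess (emp l) f A -> exists S, In S (powerset A) /\
    s <= lsum (indicator S) l / INR n - lsum (fun a => f a * indicator S a) A.
Proof.
  intros Hlen Hn Hl Hs.
  set (B := filter (fun x => if Rlt_dec (f x) (emp l x) then true else false) A).
  exists B. split; [apply filter_In_powerset|].
  assert (0 < INR n) by (apply lt_0_INR; lia).
  replace (lsum (indicator B) l / INR n - lsum (fun a => f a * indicator B a) A)
    with (lsum (fun x => indicator B x * (emp l x - f x)) A).
  - eapply Rle_trans; [exact Hs|]. right. apply lsum_ext. intros x Hx. unfold indicator.
    destruct (in_dec Nat.eq_dec x B) as [HB|HB]; unfold B in HB; rewrite filter_In in HB;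
      destruct (Rlt_dec (f x) (emp l x)) as [Hlt|Hge].
    + rewrite Rmax_right by lra. ring.
    + destruct HB as [_ HB]. discriminate.
    + exfalso. apply HB. auto.
    + rewrite Rmax_left by lra. ring.
  - rewrite <- (lsum_count_occ _ A l (fin_pmf_NoDup Hf) Hl).
    unfold Rdiv. rewrite Rmult_comm, <- lsum_scal, <- lsum_minus.
    apply lsum_ext. intros x _. unfold emp. rewrite Hlen. field. lra.
Qed.

Lemma excess_emp_tail n K s : 0 <= s -> (1 <= n)%nat ->
  trunc_prob f n K (fun l => s <= excess (emp l) f A) <= 2 ^ length A * exp (- (2 * INR n * s ^ 2)).
Proof.
  intros Hs Hn.
  eapply Rle_trans.
  { apply (trunc_prob_union f A Hf n K _
      (fun S l => s <= lsum (indicator S) l / INR n - lsum (fun a => f a * indicator S a) A)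
      (powerset A)).
    intros l Hl HlA HE. apply excess_emp_attained; auto. }
  eapply Rle_trans.
  { apply lsum_le. intros S _. apply hoeffding_frequency; auto. apply indicator_01. }
  rewrite lsum_const, length_powerset, pow_INR. simpl INR. replace (1 + 1) with 2 by ring. lra.
Qed.

Lemma prob_le_of_le_excess n E c eps : 0 < c -> 0 <= eps -> (1 <= n)%nat ->
  (forall l, length l = n -> incl l A -> E l -> eps <= c * excess (emp l) f A) ->
  prob_le f n E (2 ^ length A * exp (- (2 * INR n * eps ^ 2) / c ^ 2)).
Proof.
  intros Hc Heps Hn HE K.
  replace (- (2 * INR n * eps ^ 2) / c ^ 2) with (- (2 * INR n * (eps / c) ^ 2)) by (field; lra).
  apply Rle_trans with (trunc_prob f n K (fun l => eps / c <= excess (emp l) f A)).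
  - apply (trunc_prob_mono f A Hf). intros l Hlen Hl HEl.
    apply (Rmult_le_reg_l c); auto. replace (c * (eps / c)) with eps by (field; lra). auto.
  - apply excess_emp_tail; auto. apply Rdiv_nonneg; lra.
Qed.

End Excess.

(** * Pointwise inequalities for the information quantities *)

Lemma mul_ln_ratio_le P Q m : 0 < P <= 1 -> m <= Q -> 0 < m ->
  P * ln (P / Q) <= Rmax 0 (P - Q) / m.
Proof.
  intros HP HQ Hm. assert (HQ0 : 0 < Q) by lra.
  set (r := P / Q). assert (Hr : 0 < r) by (apply Rdiv_lt_0_compat; lra).
  apply Rle_trans with (P * (r - 1)); [apply Rmult_le_compat_l; [lra | apply ln_le_sub1; auto]|].
  replace (P * (r - 1)) with ((P - Q) * r) by (unfold r; field; lra).
  destruct (Rle_dec P Q).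
  - rewrite Rmax_left by lra. unfold Rdiv; rewrite Rmult_0_l.
    assert (0 <= (Q - P) * r) by (apply Rmult_le_pos; lra). lra.
  - rewrite Rmax_right by lra. unfold Rdiv. apply Rmult_le_compat_l; [lra|].
    unfold r, Rdiv. apply (Rmult_le_reg_r (Q * m)); [nra|].
    replace (P * / Q * (Q * m)) with (P * m) by (field; lra).
    replace (/ m * (Q * m)) with Q by (field; lra). nra.
Qed.

Lemma mul_ln_ratio_ge P Q : 0 < P -> 0 < Q -> P - Q <= P * ln (P / Q).
Proof.
  intros HP HQ. assert (H := one_sub_inv_le_ln (P / Q) ltac:(apply Rdiv_lt_0_compat; lra)).
  replace (/ (P / Q)) with (Q / P) in H by (field; lra).
  replace (P - Q) with (P * (1 - Q / P)) by (field; lra). apply Rmult_le_compat_l; lra.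
Qed.

(* From [ln y <= (y - 1/y)/2] when [Q > P] and [ln y <= y - 1] when [Q <= P]. *)
Lemma mul_ln_ratio_le_second_order P Q m T : 0 < P <= 1 -> m <= Q <= 1 -> 0 < m -> T < m ->
  Rmax 0 (Q - P) <= T -> Rmax 0 (P - Q) <= T ->
  Q * ln (Q / P) <= (Q - P) + Rmax 0 (Q - P) * (T / (2 * (m - T))) + Rmax 0 (P - Q) * (T / m).
Proof.
  intros HP HQ Hm HT H1 H2.
  destruct (Rlt_dec P Q) as [Hlt|Hge].
  - rewrite (Rmax_right 0 (Q - P)) in * by lra. rewrite (Rmax_left 0 (P - Q)) in * by lra.
    assert (HQP : 1 <= Q / P)
      by (apply (Rmult_le_reg_r P); [lra|]; unfold Rdiv; rewrite Rmult_assoc, Rinv_l; lra).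
    assert (Hy := ln_le_half_sub_inv (Q / P) HQP).
    apply Rle_trans with (Q * ((Q / P - / (Q / P)) / 2)); [apply Rmult_le_compat_l; lra|].
    replace (Q * ((Q / P - / (Q / P)) / 2)) with ((Q - P) + (Q - P) * ((Q - P) / (2 * P)))
      by (field; lra).
    rewrite Rmult_0_l, Rplus_0_r. apply Rplus_le_compat_l. apply Rmult_le_compat_l; [lra|].
    unfold Rdiv. apply (Rmult_le_reg_r (2 * P * (m - T))); [nra|].
    replace ((Q - P) * / (2 * P) * (2 * P * (m - T))) with ((Q - P) * (m - T)) by (field; lra).
    replace (T * / (2 * (m - T)) * (2 * P * (m - T))) with (T * P) by (field; lra).
    nra.
  - rewrite (Rmax_left 0 (Q - P)) in * by lra. rewrite (Rmax_right 0 (P - Q)) in * by lra.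
    assert (H3 := ln_le_sub1 (Q / P) ltac:(apply Rdiv_lt_0_compat; lra)).
    apply Rle_trans with (Q * (Q / P - 1)); [apply Rmult_le_compat_l; lra|].
    replace (Q * (Q / P - 1)) with ((Q - P) + (P - Q) * ((P - Q) / P)) by (field; lra).
    rewrite Rmult_0_l, Rplus_0_r. apply Rplus_le_compat_l. apply Rmult_le_compat_l; [lra|].
    unfold Rdiv. apply (Rmult_le_reg_r (P * m)); [nra|].
    replace ((P - Q) * / P * (P * m)) with ((P - Q) * m) by (field; lra).
    replace (T * / m * (P * m)) with (T * P) by (field; lra).
    nra.
Qed.

Lemma second_order_coeff_le T m : 0 <= T -> 0 < m -> 2 * T ^ 2 < m ^ 2 ->
  T / (2 * (m - T)) + T / m <= 2.
Proof.
  intros HT Hm H.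
  assert (T <= 71 / 100 * m) by nra.
  apply (Rmult_le_reg_r (2 * m * (m - T))); [nra|].
  replace ((T / (2 * (m - T)) + T / m) * (2 * m * (m - T))) with (T * m + 2 * T * (m - T))
    by (field; lra).
  nra.
Qed.

Lemma H_is_lsum b g A : NoDup A -> (forall x, ~ In x A -> g x = 0) ->
  H_is b g (lsum (ent_term b g) A).
Proof.
  intros Hn Hout. apply infinite_sum_finite_support; auto.
  intros x Hx. unfold ent_term. rewrite (Hout x Hx). destruct (Rlt_dec 0 0); [lra | reflexivity].
Qed.

Lemma D_is_lsum b p q A : NoDup A -> abs_cont p q -> (forall x, ~ In x A -> p x = 0) ->
  D_is b p q (lsum (div_term b p q) A).
Proof.
  intros Hn Hpq Hout. split; auto. apply infinite_sum_finite_support; auto.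
  intros x Hx. unfold div_term. rewrite (Hout x Hx). destruct (Rlt_dec 0 0); [lra | reflexivity].
Qed.

Section InformationTerms.
Variable b : R.
Hypothesis Hb : 1 < b.
Let Hlnb : 0 < ln b := ln_gt_0 b Hb.

Lemma div_term_le p q m x : 0 < m -> m <= q x -> 0 <= p x <= 1 ->
  div_term b p q x <= 1 / ln b / m * Rmax 0 (p x - q x).
Proof.
  intros Hm Hq Hp. unfold div_term, logb.
  destruct (Rlt_dec 0 (p x)).
  - replace (p x * (ln (p x / q x) / ln b)) with (p x * ln (p x / q x) / ln b) by (field; lra).
    replace (1 / ln b / m * Rmax 0 (p x - q x)) with (Rmax 0 (p x - q x) / m / ln b)
      by (field; lra).
    apply Rdiv_le_compat_r; auto. apply mul_ln_ratio_le; lra.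
  - apply Rmult_le_pos; [apply Rdiv_nonneg; [apply Rdiv_nonneg|]; lra | apply Rmax_l].
Qed.

Lemma ent_term_pos q x : 0 < q x -> ent_term b q x = - (q x * ln (q x)) / ln b.
Proof.
  intros Hq. unfold ent_term, logb. destruct (Rlt_dec 0 (q x)); [field; lra | lra].
Qed.

Lemma ent_term_sub_le p q m x : 0 < m -> m <= q x <= 1 -> 0 <= p x <= 1 ->
  ent_term b p x - ent_term b q x <=
  1 / ln b * (Rmax 0 (q x - p x) * ln (1 / m) + (q x - p x) * (1 + ln m)).
Proof.
  intros Hm Hq Hp. rewrite (ent_term_pos q x) by lra.
  assert (Hlq : ln m <= ln (q x)) by (apply ln_le; lra).
  assert (Hlq1 : ln (q x) <= 0) by (rewrite <- ln_1; apply ln_le; lra).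
  assert (Hlm : ln (1 / m) = - ln m) by (unfold Rdiv; rewrite Rmult_1_l, ln_Rinv; auto).
  rewrite Hlm.
  assert (Key : forall E, E <= (q x - p x) * (ln (q x) + 1) ->
     E / ln b <= 1 / ln b * (Rmax 0 (q x - p x) * - ln m + (q x - p x) * (1 + ln m))).
  { intros E HE.
    replace (1 / ln b * (Rmax 0 (q x - p x) * - ln m + (q x - p x) * (1 + ln m)))
      with ((Rmax 0 (q x - p x) * - ln m + (q x - p x) * (1 + ln m)) / ln b) by (field; lra).
    apply Rdiv_le_compat_r; auto. eapply Rle_trans; [exact HE|].
    destruct (Rle_dec (p x) (q x)); [rewrite Rmax_right | rewrite Rmax_left]; nra. }
  unfold ent_term at 1, logb. destruct (Rlt_dec 0 (p x)).
  - replace (- (p x * (ln (p x) / ln b)) - - (q x * ln (q x)) / ln b)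
      with ((- (p x * ln (p x)) + q x * ln (q x)) / ln b) by (field; lra).
    apply Key. assert (H := mul_ln_ratio_ge (p x) (q x) ltac:(lra) ltac:(lra)).
    rewrite ln_div in H by lra. nra.
  - replace (0 - - (q x * ln (q x)) / ln b) with (q x * ln (q x) / ln b) by (field; lra).
    apply Key. nra.
Qed.

Lemma ent_term_sub_le_rev p q m x : 0 < m -> m <= q x <= 1 -> 0 <= p x <= 1 ->
  ent_term b q x - ent_term b p x <=
  1 / ln b * (Rmax 0 (p x - q x) * (1 / m + ln (1 / m)) + (p x - q x) * ln m).
Proof.
  intros Hm Hq Hp. rewrite (ent_term_pos q x) by lra.
  assert (Hlq : ln m <= ln (q x)) by (apply ln_le; lra).
  assert (Hlq1 : ln (q x) <= 0) by (rewrite <- ln_1; apply ln_le; lra).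
  assert (Hlm : ln (1 / m) = - ln m) by (unfold Rdiv; rewrite Rmult_1_l, ln_Rinv; auto).
  rewrite Hlm.
  assert (Hmx : (p x - q x) * (ln (q x) - ln m) <= Rmax 0 (p x - q x) * - ln m)
    by (destruct (Rle_dec (p x) (q x)); [rewrite Rmax_left | rewrite Rmax_right]; nra).
  assert (Hr : 0 <= Rmax 0 (p x - q x) / m) by (apply Rdiv_nonneg; [apply Rmax_l | lra]).
  replace (1 / ln b * (Rmax 0 (p x - q x) * (1 / m + - ln m) + (p x - q x) * ln m))
    with ((Rmax 0 (p x - q x) / m + (Rmax 0 (p x - q x) * - ln m + (p x - q x) * ln m)) / ln b)
    by (field; lra).
  unfold ent_term, logb. destruct (Rlt_dec 0 (p x)).
  - replace (- (q x * ln (q x)) / ln b - - (p x * (ln (p x) / ln b)))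
      with ((p x * ln (p x / q x) + (p x - q x) * ln (q x)) / ln b)
      by (rewrite ln_div by lra; field; lra).
    apply Rdiv_le_compat_r; auto. apply Rplus_le_compat; [apply mul_ln_ratio_le; lra | nra].
  - replace (- (q x * ln (q x)) / ln b - 0) with (- (q x * ln (q x)) / ln b) by ring.
    apply Rdiv_le_compat_r; auto. replace (p x) with 0 in * by lra. nra.
Qed.

Lemma div_term_rev_le p q m T x : 0 < m -> m <= q x <= 1 -> 0 < p x <= 1 -> T < m ->
  Rmax 0 (q x - p x) <= T -> Rmax 0 (p x - q x) <= T ->
  div_term b q p x <= 1 / ln b *
    ((q x - p x) + Rmax 0 (q x - p x) * (T / (2 * (m - T))) + Rmax 0 (p x - q x) * (T / m)).
Proof.
  intros Hm Hq Hp HT H1 H2. unfold div_term, logb. destruct (Rlt_dec 0 (q x)); [|lra].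
  replace (q x * (ln (q x / p x) / ln b)) with (q x * ln (q x / p x) / ln b) by (field; lra).
  set (B := (q x - p x) + Rmax 0 (q x - p x) * (T / (2 * (m - T))) + Rmax 0 (p x - q x) * (T / m)).
  apply Rle_trans with (B / ln b); [|right; field; lra].
  apply Rdiv_le_compat_r; auto. apply mul_ln_ratio_le_second_order; lra.
Qed.

End InformationTerms.

Lemma emp_out A l x : incl l A -> ~ In x A -> emp l x = 0.
Proof. intros Hl Hx. apply emp_notin. intros H; apply Hx, Hl, H. Qed.

Lemma In_firstn_le {T} (x : T) N k l : (N <= k)%nat -> In x (firstn N l) -> In x (firstn k l).
Proof.
  intros Hk H. rewrite <- (firstn_skipn N (firstn k l)), firstn_firstn.
  replace (Nat.min N k) with N by lia. apply in_or_app. auto.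
Qed.

Definition avoid (x y : nat) : R := if Nat.eq_dec x y then 0 else 1.

Lemma avoid_nonneg x y : 0 <= avoid x y.
Proof. unfold avoid. destruct (Nat.eq_dec x y); lra. Qed.

Lemma prodf_avoid_notin x L : ~ In x L -> prodf (avoid x) L = 1.
Proof.
  induction L as [|a L IH]; intros H; [reflexivity|]. simpl.
  rewrite IH by (intros X; apply H; simpl; auto).
  unfold avoid. destruct (Nat.eq_dec x a); [subst; exfalso; apply H; simpl; auto | ring].
Qed.

Lemma prob_le_pow2_succ f n E k c : 0 <= c ->
  prob_le f n E (2 ^ k * c) -> prob_le f n E (2 ^ (k + 1) * c).
Proof.
  intros Hc H K. eapply Rle_trans; [apply H|].
  rewrite pow_add. assert (0 < 2 ^ k) by (apply pow_lt; lra). simpl. nra.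
Qed.

Section Bounds.
Variables (b : R) (f : nat -> R) (A : list nat) (m : R).
Hypotheses (Hb : 1 < b) (Hf : fin_pmf f A).
Hypotheses (Hm0 : 0 < m) (Hm1 : m <= 1) (Hmin : forall x, In x A -> m <= f x).
Let Hlnb : 0 < ln b := ln_gt_0 b Hb.
Let Hinv_m : 0 < 1 / m := Rdiv_lt_0_compat 1 m Rlt_0_1 Hm0.
Let Hloge_m : 0 < 1 / ln b / m := Rdiv_lt_0_compat _ m (Rdiv_lt_0_compat 1 _ Rlt_0_1 Hlnb) Hm0.

Lemma emp_abs_cont l : incl l A -> abs_cont (emp l) f.
Proof.
  intros Hl x Hx. apply (emp_out A); auto.
  intros HxA. apply (fin_pmf_support Hf) in HxA. lra.
Qed.

Lemma H_is_emp l : incl l A -> H_is b (emp l) (lsum (ent_term b (emp l)) A).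
Proof.
  intros Hl. apply H_is_lsum; [apply (fin_pmf_NoDup Hf) | intros; apply (emp_out A); auto].
Qed.

Lemma H_is_pmf : H_is b f (lsum (ent_term b f) A).
Proof. apply H_is_lsum; [apply (fin_pmf_NoDup Hf) | apply (fin_pmf_out f A Hf)]. Qed.

Lemma D_is_emp l : incl l A -> D_is b (emp l) f (lsum (div_term b (emp l) f) A).
Proof.
  intros Hl. apply D_is_lsum; [apply (fin_pmf_NoDup Hf) | apply emp_abs_cont; auto |].
  intros; apply (emp_out A); auto.
Qed.

Lemma D_is_pmf_pos p : (forall x, In x A -> 0 < p x) -> D_is b f p (lsum (div_term b f p) A).
Proof.
  intros Hp. apply D_is_lsum; [apply (fin_pmf_NoDup Hf) | | apply (fin_pmf_out f A Hf)].
  intros x Hx. destruct (in_dec Nat.eq_dec x A) as [HxA|HxA]; [specialize (Hp x HxA); lra|].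
  apply (fin_pmf_out f A Hf); auto.
Qed.

Lemma div_emp_le_excess l :
  lsum (div_term b (emp l) f) A <= 1 / ln b / m * excess (emp l) f A.
Proof.
  unfold excess. rewrite <- lsum_scal. apply lsum_le. intros x Hx.
  apply div_term_le; auto. split; [apply emp_nonneg | apply emp_le_1].
Qed.

Lemma entropy_emp_dev_le_excess l : incl l A -> (1 <= length l)%nat ->
  Rabs (lsum (ent_term b (emp l)) A - lsum (ent_term b f) A) <=
  (logb b (1 / m) + 1 / ln b / m) * excess (emp l) f A.
Proof.
  intros Hl Hlen.
  assert (Hsum : lsum (emp l) A = lsum f A)
    by (rewrite (fin_pmf_sum Hf); apply lsum_emp; auto; apply (fin_pmf_NoDup Hf)).
  assert (Hq : forall x, In x A -> m <= f x <= 1)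
    by (intros; split; auto; apply (fin_pmf_le_1 f A Hf)).
  assert (Hp : forall x, 0 <= emp l x <= 1) by (intros; split; [apply emp_nonneg | apply emp_le_1]).
  assert (Hlm : 0 <= ln (1 / m)).
  { rewrite <- ln_1. apply ln_le; [lra|]. unfold Rdiv. rewrite Rmult_1_l.
    apply (Rmult_le_reg_l m); [lra|]. rewrite Rinv_r by lra. lra. }
  assert (HT0 := excess_nonneg (emp l) f A).
  assert (Up : lsum (ent_term b (emp l)) A - lsum (ent_term b f) A <=
               1 / ln b * ln (1 / m) * excess (emp l) f A).
  { rewrite <- lsum_minus. eapply Rle_trans.
    { apply lsum_le. intros x Hx. apply (ent_term_sub_le b Hb (emp l) f m x); auto. }
    rewrite (lsum_ext _ (fun x => 1 / ln b * ln (1 / m) * Rmax 0 (f x - emp l x)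
                                  + 1 / ln b * (1 + ln m) * (f x - emp l x))) by (intros; ring).
    rewrite lsum_plus, !lsum_scal, lsum_minus, Hsum.
    fold (excess f (emp l) A). rewrite excess_sym by auto. lra. }
  assert (Lo : lsum (ent_term b f) A - lsum (ent_term b (emp l)) A <=
               1 / ln b * (1 / m + ln (1 / m)) * excess (emp l) f A).
  { rewrite <- lsum_minus. eapply Rle_trans.
    { apply lsum_le. intros x Hx. apply (ent_term_sub_le_rev b Hb (emp l) f m x); auto. }
    rewrite (lsum_ext _ (fun x => 1 / ln b * (1 / m + ln (1 / m)) * Rmax 0 (emp l x - f x)
                                  + 1 / ln b * ln m * (emp l x - f x))) by (intros; ring).
    rewrite lsum_plus, !lsum_scal, lsum_minus, Hsum. fold (excess (emp l) f A). lra. }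
  assert (0 <= 1 / ln b * (1 / m) * excess (emp l) f A)
    by (apply Rmult_le_pos; auto; apply Rmult_le_pos; apply Rdiv_nonneg; lra).
  unfold logb.
  replace ((ln (1 / m) / ln b + 1 / ln b / m) * excess (emp l) f A)
    with (1 / ln b * (1 / m + ln (1 / m)) * excess (emp l) f A) by (field; lra).
  apply Rabs_le. split; lra.
Qed.

Lemma emp_pos_of_excess_lt l : incl l A -> (1 <= length l)%nat ->
  excess (emp l) f A < m -> forall x, In x A -> 0 < emp l x.
Proof.
  intros Hl Hlen HT x Hx.
  assert (Hsum : lsum f A = lsum (emp l) A)
    by (rewrite (fin_pmf_sum Hf); symmetry; apply lsum_emp; auto; apply (fin_pmf_NoDup Hf)).
  assert (H := excess_ge_term f (emp l) A x Hx). rewrite excess_sym in H by auto.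
  generalize (Rmax_r 0 (f x - emp l x)) (Hmin x Hx). lra.
Qed.

Lemma div_rev_emp_le_excess l : incl l A -> (1 <= length l)%nat ->
  2 * excess (emp l) f A ^ 2 < m ^ 2 ->
  lsum (div_term b f (emp l)) A <= 1 / ln b * (1 / m + 1) * excess (emp l) f A.
Proof.
  intros Hl Hlen HT2.
  assert (Hsum : lsum f A = lsum (emp l) A)
    by (rewrite (fin_pmf_sum Hf); symmetry; apply lsum_emp; auto; apply (fin_pmf_NoDup Hf)).
  assert (Hsym := excess_sym f (emp l) A Hsum).
  set (T := excess (emp l) f A) in *.
  assert (HT0 : 0 <= T) by apply excess_nonneg.
  assert (HTm : T < m) by nra.
  eapply Rle_trans.
  { apply lsum_le. intros x Hx. apply (div_term_rev_le b Hb (emp l) f m T x); auto.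
    - split; [auto | apply (fin_pmf_le_1 f A Hf)].
    - split; [apply (emp_pos_of_excess_lt l) | apply emp_le_1]; auto.
    - rewrite Hsym. apply excess_ge_term; auto.
    - apply excess_ge_term; auto. }
  rewrite lsum_scal.
  rewrite (lsum_ext _ (fun x => (f x - emp l x) + T / (2 * (m - T)) * Rmax 0 (f x - emp l x)
                                + T / m * Rmax 0 (emp l x - f x))) by (intros; ring).
  rewrite !lsum_plus, !lsum_scal, lsum_minus, Hsum.
  fold (excess f (emp l) A). fold (excess (emp l) f A). rewrite <- Hsym. fold T.
  assert (Hr := second_order_coeff_le T m HT0 Hm0 HT2).
  assert (1 <= 1 / m) by (apply (Rmult_le_reg_l m); [lra|]; field_simplify; lra).
  rewrite Rmult_assoc. apply Rmult_le_compat_l; [apply Rdiv_nonneg; lra|].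
  assert (T * (T / (2 * (m - T)) + T / m) <= 2 * T) by nra.
  nra.
Qed.

Lemma emp_regular n :
  prob_le f n (fun xs => ~ (abs_cont (emp xs) f /\ H_finite b (emp xs) /\ D_finite b (emp xs) f)) 0.
Proof.
  intros K. rewrite <- (trunc_prob_False f n K).
  apply (trunc_prob_mono f A Hf). intros l _ Hl Hbad. apply Hbad.
  split; [apply emp_abs_cont; auto | split; eexists; [apply H_is_emp | apply D_is_emp]; auto].
Qed.

Lemma div_emp_tail n eps : (1 <= n)%nat -> 0 < eps ->
  prob_le f n (fun xs => D_gt b (emp xs) f eps)
    (2 ^ length A * exp (- (2 * m ^ 2 * INR n * eps ^ 2) / (1 / ln b) ^ 2)).
Proof.
  intros Hn Heps.
  replace (- (2 * m ^ 2 * INR n * eps ^ 2) / (1 / ln b) ^ 2)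
    with (- (2 * INR n * eps ^ 2) / (1 / ln b / m) ^ 2) by (field; lra).
  apply (prob_le_of_le_excess f A Hf); [exact Hloge_m | lra | auto |].
  intros l _ Hl [Hinf | Hgt].
  - exfalso. apply Hinf. eexists. apply D_is_emp; auto.
  - left. eapply Rlt_le_trans; [apply Hgt, D_is_emp; auto | apply div_emp_le_excess].
Qed.

Lemma entropy_emp_tail n eps : (1 <= n)%nat -> 0 < eps ->
  prob_le f n (fun xs => H_dev_gt b (emp xs) f eps)
    (2 ^ length A * exp (- (2 * INR n * eps ^ 2) / (logb b (1 / m) + 1 / ln b / m) ^ 2)).
Proof.
  intros Hn Heps.
  assert (0 <= logb b (1 / m)).
  { apply Rdiv_nonneg; auto. rewrite <- ln_1. apply ln_le; [lra|].
    apply (Rmult_le_reg_l m); [lra|]. field_simplify; lra. }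
  apply (prob_le_of_le_excess f A Hf); [generalize Hloge_m; lra | lra | auto |].
  intros l Hlen Hl Hdev. left.
  eapply Rlt_le_trans; [apply Hdev; [apply H_is_emp; auto | apply H_is_pmf]|].
  apply entropy_emp_dev_le_excess; auto. lia.
Qed.

(* Below the threshold [m / sqrt 2] the second-order bound applies; above it
   the excess itself is a rare event. *)
Lemma div_rev_emp_tail n eps : (1 <= n)%nat -> 0 < eps ->
  prob_le f n (fun xs => D_gt b f (emp xs) eps)
    (2 ^ length A * (exp (- (2 * INR n * eps ^ 2) / ((1 / ln b) ^ 2 * (1 / m + 1) ^ 2))
                     + exp (- (INR n * m ^ 2)))).
Proof.
  intros Hn Heps K.
  set (c := 1 / ln b * (1 / m + 1)).
  assert (Hc : 0 < c)
    by (apply Rmult_lt_0_compat; [apply Rdiv_lt_0_compat; lra | generalize Hinv_m; lra]).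
  assert (Hs2 : sqrt 2 * sqrt 2 = 2) by (apply sqrt_sqrt; lra).
  assert (0 < sqrt 2) by (apply sqrt_lt_R0; lra).
  eapply Rle_trans.
  { apply (trunc_prob_or f A Hf) with (E1 := fun l => eps <= c * excess (emp l) f A)
                                      (E2 := fun l => m <= sqrt 2 * excess (emp l) f A).
    intros l Hlen Hl HD.
    destruct (Rle_lt_dec m (sqrt 2 * excess (emp l) f A)) as [Hbig | Hsmall]; [right; auto | left].
    assert (HsT : 0 <= sqrt 2 * excess (emp l) f A)
      by (apply Rmult_le_pos; [lra | apply excess_nonneg]).
    assert (HT2 : 2 * excess (emp l) f A ^ 2 < m ^ 2).
    { replace (2 * excess (emp l) f A ^ 2)
        with ((sqrt 2 * excess (emp l) f A) * (sqrt 2 * excess (emp l) f A))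
        by (rewrite <- Rmult_assoc, (Rmult_comm _ (sqrt 2)), <- Rmult_assoc, Hs2; ring).
      nra. }
    assert (Hpos := emp_pos_of_excess_lt l Hl ltac:(lia) ltac:(nra)).
    destruct HD as [Hinf | Hgt]; [exfalso; apply Hinf; eexists; apply D_is_pmf_pos; auto|].
    apply Rlt_le. eapply Rlt_le_trans; [apply Hgt, D_is_pmf_pos; auto|].
    apply div_rev_emp_le_excess; auto. lia. }
  rewrite Rmult_plus_distr_l. apply Rplus_le_compat.
  - replace ((1 / ln b) ^ 2 * (1 / m + 1) ^ 2) with (c ^ 2) by (unfold c; ring).
    apply (prob_le_of_le_excess f A Hf); auto; lra.
  - replace (- (INR n * m ^ 2)) with (- (2 * INR n * m ^ 2) / sqrt 2 ^ 2)
      by (rewrite pow2_sqrt by lra; field).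
    apply (prob_le_of_le_excess f A Hf); auto; lra.
Qed.

Lemma lsum_avoid x : In x A -> lsum (fun a => f a * avoid x a) A = 1 - f x.
Proof.
  intros Hx.
  rewrite <- (fin_pmf_sum Hf), <- (lsum_indicator f A x Hx (fin_pmf_NoDup Hf)), <- lsum_minus.
  apply lsum_ext. intros a _. unfold avoid. destruct (Nat.eq_dec x a); ring.
Qed.

Lemma prob_unseen_atom n N K : (N <= n)%nat ->
  trunc_prob f n K (fun l => exists x, In x A /\ ~ In x (firstn N l))
  <= INR (length A) * (1 - m) ^ N.
Proof.
  intros HN.
  eapply Rle_trans.
  { apply (trunc_prob_le_expect f A Hf)
      with (G := fun l => lsum (fun x => prodf (avoid x) (firstn N l)) A).
    - intros l. apply lsum_nonneg. intros; apply prodf_nonneg, avoid_nonneg.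
    - intros l _ _ [x [Hx Hnot]]. rewrite <- (prodf_avoid_notin x _ Hnot).
      apply (lsum_ge_term (fun x => prodf (avoid x) (firstn N l))); auto.
      intros; apply prodf_nonneg, avoid_nonneg. }
  rewrite (lsum_ext _ (fun l => lsum (fun x => prodf f l * prodf (avoid x) (firstn N l)) A))
    by (intros; rewrite lsum_scal; reflexivity).
  rewrite lsum_exchange, <- lsum_const.
  apply lsum_le. intros x Hx.
  eapply Rle_trans; [apply (lsum_tuples_prod_firstn_le f A Hf); auto using avoid_nonneg|].
  rewrite lsum_avoid by auto. apply pow_incr.
  generalize (Hmin x Hx) (fin_pmf_le_1 f A Hf x); lra.
Qed.

Lemma div_rev_emp_eventually_finite delta : 0 < delta ->
  exists N, (1 <= N)%nat /\ forall n, (N <= n)%nat ->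
    prob_le f n (fun xs => ~ (forall k, (N <= k <= n)%nat -> D_finite b f (emp (firstn k xs))))
      delta.
Proof.
  intros Hd.
  assert (HA : 0 < INR (length A)) by (apply lt_0_INR, (fin_pmf_nonempty f A Hf)).
  destruct (pow_lt_1_zero (1 - m) ltac:(rewrite Rabs_right; lra)
              (delta / INR (length A)) ltac:(apply Rdiv_lt_0_compat; lra)) as [N HN].
  exists (S N). split; [lia|]. intros n Hn K.
  eapply Rle_trans.
  { apply (trunc_prob_mono f A Hf)
      with (E' := fun l => exists x, In x A /\ ~ In x (firstn (S N) l)).
    intros l _ _ Hinf.
    destruct (classic (forall x, In x A -> In x (firstn (S N) l))) as [Hall | Hmiss].
    - exfalso. apply Hinf. intros k Hk. eexists. apply D_is_pmf_pos.
      intros x Hx. apply emp_pos, (In_firstn_le x (S N)); [lia | auto].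
    - apply not_all_ex_not in Hmiss. destruct Hmiss as [x Hx]. exists x. apply imply_to_and; auto. }
  eapply Rle_trans; [apply prob_unseen_atom; auto|].
  specialize (HN (S N) ltac:(lia)). rewrite Rabs_right in HN by (apply Rle_ge, pow_le; lra).
  apply (Rmult_lt_compat_l (INR (length A))) in HN; auto.
  replace (INR (length A) * (delta / INR (length A))) with delta in HN by (field; lra). lra.
Qed.

End Bounds.

Theorem theorem1
  (b : R) (f : nat -> R) (A : list nat) (m : R)
  (Hb : 1 < b)
  (Hf : is_pmf f)
  (HA : NoDup A /\ forall x, In x A <-> 0 < f x)
  (Hm : (exists x, In x A /\ f x = m) /\ (forall x, In x A -> m <= f x)) :
  let loge := 1 / ln b in
  let M := logb b (1 / m) in
  let C := 2 ^ (length A + 1) in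
  (* almost surely: emp << mu, H(emp) < oo, D(emp||mu) < oo *)
  (forall n, (1 <= n)%nat ->
     prob_le f n (fun xs => ~ (abs_cont (emp xs) f /\ H_finite b (emp xs)
                              /\ D_finite b (emp xs) f)) 0) /\
  (forall n eps, (1 <= n)%nat -> 0 < eps ->
     prob_le f n (fun xs => D_gt b (emp xs) f eps)
       (C * exp (- (2 * m ^ 2 * INR n * eps ^ 2) / loge ^ 2)) /\
     prob_le f n (fun xs => H_dev_gt b (emp xs) f eps)
       (C * exp (- (2 * INR n * eps ^ 2) / (M + loge / m) ^ 2)) /\
     prob_le f n (fun xs => D_gt b f (emp xs) eps)
       (C * (exp (- (2 * INR n * eps ^ 2) / (loge ^ 2 * (1 / m + 1) ^ 2))
             + exp (- (INR n * m ^ 2))))) /\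
  (* almost surely D(mu||emp_n) < oo eventually:
     P(liminf_n {D(mu||emp_n) < oo}) = 1, expressed via finite-dimensional laws *)
  (forall delta, 0 < delta ->
     exists N, (1 <= N)%nat /\
       forall Mn, (N <= Mn)%nat ->
         prob_le f Mn (fun xs => ~ (forall k, (N <= k <= Mn)%nat ->
                                     D_finite b f (emp (firstn k xs)))) delta).
Proof.
  intros loge M C.
  destruct HA as [HnA HsuppA]. destruct Hm as [[x0 [Hx0 Hfx0]] Hmin].
  assert (Hpmf : fin_pmf f A) by (apply fin_pmf_of_is_pmf; auto).
  assert (Hm0 : 0 < m) by (rewrite <- Hfx0; apply HsuppA; auto).
  assert (Hm1 : m <= 1) by (rewrite <- Hfx0; apply (fin_pmf_le_1 f A Hpmf)).
  split; [|split].
  - intros n _. apply (emp_regular b f A); auto.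
  - intros n eps Hn Heps. split; [|split]; apply prob_le_pow2_succ.
    + left; apply exp_pos.
    + apply (div_emp_tail b f A m); auto.
    + left; apply exp_pos.
    + apply (entropy_emp_tail b f A m); auto.
    + generalize (exp_pos (- (2 * INR n * eps ^ 2) / (loge ^ 2 * (1 / m + 1) ^ 2)))
        (exp_pos (- (INR n * m ^ 2))); lra.
    + apply (div_rev_emp_tail b f A m); auto.
  - apply (div_rev_emp_eventually_finite b f A m); auto.
Qed.
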